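(* Let $p$ be a prime and $n\ge 2$, and let $T^+(n,\mathbf{Q}_p)$ be the group (under matrix multiplication) of upper-triangular $n\times n$ matrices over $\mathbf{Q}_p$ with all diagonal entries equal to $1$. For $A=\{a_{j,k}\}$ put $N(A)=\max_{1\le j<k\le n}|a_{j,k}|_p^{1/(k-j)}$. Then $N(A^{-1})=N(A)$ for every $A\in T^+(n,\mathbf{Q}_p)$, and $N((A')^{-1}A)$ defines a left-invariant ultrametric and $N(A(A')^{-1})$ a right-invariant ultrametric on $T^+(n,\mathbf{Q}_p)$, each determining the topology induced from the usual topology on $M_n(\mathbf{Q}_p)$.
   Context: $|\cdot|_p$ denotes the $p$-adic absolute value; $M_n(\mathbf{Q}_p)$ carries the product topology of $\mathbf{Q}_p^{n^2}$. *)

From HB Require Import structures.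
From mathcomp Require Import all_boot all_order all_algebra.
From mathcomp Require Import boolp reals exp.
Set Implicit Arguments. Unset Strict Implicit. Unset Printing Implicit Defensive.
Import Order.TTheory GRing.Theory Num.Theory.
Local Open Scope ring_scope.

(* The p-adic absolute value on Q: |q|_p = p^(-v_p(q)), |0|_p = 0. *)
Definition padic_abs_rat (R : realType) (p : nat) (q : rat) : R :=
  if q == 0 then 0
  else (p%:R ^+ logn p `|denq q|%N) / (p%:R ^+ logn p `|numq q|%N).

(* (K, abs) is a model of Q_p with its p-adic absolute value: a field with a
   non-archimedean absolute value extending |.|_p on Q, in which Q is dense,
   and which is complete.  Such a pair is unique up to unique isometric
   isomorphism, namely it is the completion Q_p of (Q, |.|_p). *)
Definition is_Qp (R : realType) (p : nat) (K : fieldType) (abs : K -> R) : Prop :=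
  [/\ (forall x : K, abs x = 0 <-> x = 0),
      (forall x y : K, abs (x * y) = abs x * abs y) /\
      (forall x y : K, abs (x + y) <= Num.max (abs x) (abs y)),
      (forall q : rat, abs (ratr q) = padic_abs_rat R p q),
      (forall (x : K) (e : R), 0 < e -> exists q : rat, abs (x - ratr q) < e)
    & (forall u : nat -> K,
        (forall e : R, 0 < e -> exists N : nat, forall m k : nat,
            (N <= m)%N -> (N <= k)%N -> abs (u m - u k) < e) ->
        exists l : K, forall e : R, 0 < e -> exists N : nat, forall m : nat,
            (N <= m)%N -> abs (u m - l) < e)].

Definition unitri (K : fieldType) (n : nat) (A : 'M[K]_n) : Prop :=
  (forall i j : 'I_n, (j < i)%N -> A i j = 0) /\ (forall i : 'I_n, A i i = 1).

Definition Nnorm (R : realType) (K : fieldType) (abs : K -> R) (n : nat)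
  (A : 'M[K]_n) : R :=
  \big[Num.max/0]_(j < n) \big[Num.max/0]_(k < n | (j < k)%N)
     powR (abs (A j k)) (((k - j)%N)%:R)^-1.

Definition is_ultrametric_on (R : realType) (M : Type) (S : M -> Prop)
  (d : M -> M -> R) : Prop :=
  [/\ (forall x y, S x -> S y -> 0 <= d x y),
      (forall x y, S x -> S y -> (d x y = 0 <-> x = y)),
      (forall x y, S x -> S y -> d x y = d y x)
    & (forall x y z, S x -> S y -> S z -> d x z <= Num.max (d x y) (d y z))].

Definition metric_open_in (R : realType) (M : Type) (S : M -> Prop)
  (d : M -> M -> R) (U : M -> Prop) : Prop :=
  forall x, U x -> exists2 e : R, 0 < e & forall y, S y -> d x y < e -> U y.

(* V is open in the product topology of K^(n*n) (product of the topologies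
   of the absolute value on each entry); for a finite product, a set is open
   iff it contains an entrywise box around each of its points. *)
Definition prod_open (R : realType) (K : fieldType) (abs : K -> R) (n : nat)
  (V : 'M[K]_n -> Prop) : Prop :=
  forall X, V X -> exists2 e : R, 0 < e &
    forall Y : 'M[K]_n, (forall i j, abs (Y i j - X i j) < e) -> V Y.

Definition induces_subspace_topology (R : realType) (K : fieldType)
  (abs : K -> R) (n : nat) (S : 'M[K]_n -> Prop) (d : 'M[K]_n -> 'M[K]_n -> R)
  : Prop :=
  forall U : 'M[K]_n -> Prop, (forall X, U X -> S X) ->
    (metric_open_in S d U <->
     exists2 V, prod_open abs V & forall X, U X <-> (V X /\ S X)).

(* For r >= 0 let B_r be the upper-triangular matrices with |a_jk| <= r^(k-j)
   (graded_bounded). By the ultrametric inequality B_r is closed under sums and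
   products, because the weights r^(i-j) r^(k-i) multiply to r^(k-j), and a
   unitriangular A lies in B_r iff N(A) <= r. As 1 - A is nilpotent, A^-1 is the
   finite Neumann series sum_(i<n) (1 - A)^i, so N(A^-1) <= N(A), with equality by
   symmetry; likewise N(AB) <= max (N A) (N B), which is the ultrametric inequality
   for both distances, while their invariance is pure algebra. Near the identity,
   N(W) and the sup-norm of W - 1 control each other, and X^-1 Y - 1 = X^-1 (Y - X),
   so metric balls and entrywise boxes around X are nested in each other.
   Only the non-archimedean absolute value is used: neither the primality of p
   nor n >= 2 plays a role. *)

From HB Require Import structures.
From mathcomp Require Import all_boot all_order all_algebra.
From mathcomp Require Import boolp reals exp zify lra.
Set Implicit Arguments. Unset Strict Implicit. Unset Printing Implicit Defensive.
Import Order.TTheory GRing.Theory Num.Theory.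
Local Open Scope ring_scope.

Section PowRInvn.
Variable R : realType.

Lemma powR_invnK (x : R) (m : nat) : 0 <= x -> (0 < m)%N ->
  powR x m%:R^-1 ^+ m = x.
Proof.
move=> x0 m0; rewrite -powR_mulrn ?powR_ge0 // -powRrM.
by rewrite mulVf ?pnatr_eq0 -?lt0n // powRr1.
Qed.

Lemma powR_invn_le (x r : R) (m : nat) : 0 <= x -> 0 <= r -> (0 < m)%N ->
  (powR x m%:R^-1 <= r) = (x <= r ^+ m).
Proof.
by move=> x0 r0 m0; rewrite -{2}(powR_invnK x0 m0) (ler_pXn2r m0) ?nnegrE ?powR_ge0.
Qed.

End PowRInvn.

Section MatrixRing.
Variables (F : pzRingType) (n : nat).
Implicit Types M Y : 'M[F]_n.

Definition upper_mx M := forall j k : 'I_n, (k < j)%N -> M j k = 0.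

Lemma upper_mulmx M M' : upper_mx M -> upper_mx M' -> upper_mx (M *m M').
Proof.
move=> uM uM' j k kj; rewrite mxE big1 // => i _.
case: (ltnP i j) => ij; first by rewrite uM // mul0r.
by rewrite uM' ?mulr0 // (leq_trans kj).
Qed.

Lemma upper_mulmx_diag M M' i : upper_mx M -> upper_mx M' ->
  (M *m M') i i = M i i * M' i i.
Proof.
move=> uM uM'; rewrite mxE (bigD1 i) //= big1 ?addr0 // => l li.
case: (ltnP l i) => il; first by rewrite uM // mul0r.
by rewrite uM' ?mulr0 // ltn_neqAle il andbT eq_sym.
Qed.

Lemma strict_upper_expr Y m (j k : 'I_n) :
  (forall j k : 'I_n, (k <= j)%N -> Y j k = 0) -> (k < j + m)%N -> (Y ^+ m) j k = 0.
Proof.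
move=> uY; elim: m j k => [|m IHm] j k km.
  by rewrite addn0 in km; rewrite expr0 mxE -val_eqE (gtn_eqF km).
rewrite exprS -mulmxE mxE big1 // => l _.
case: (leqP l j) => lj; first by rewrite uY ?mul0r.
by rewrite IHm ?mulr0 //; lia.
Qed.

End MatrixRing.

Section MatrixInverse.
Variables (F : comUnitRingType) (n : nat).
Implicit Types A B : 'M[F]_n.

Lemma mulmx1_invmx A B : A *m B = 1%:M -> invmx A = B.
Proof. by move=> AB; have [uA _] := mulmx1_unit AB; rewrite -(mulKmx uA B) AB mulmx1. Qed.

Lemma invmxM A B : A \in unitmx -> B \in unitmx ->
  invmx (A *m B) = invmx B *m invmx A.
Proof.
by move=> uA uB; apply: mulmx1_invmx; rewrite mulmxA mulmxK // mulmxV.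
Qed.

End MatrixInverse.

Section UltrametricAbs.
Variables (R : realType) (K : fieldType) (abs : K -> R).
Hypothesis abs_eq0 : forall x, abs x = 0 <-> x = 0.
Hypothesis absM : forall x y, abs (x * y) = abs x * abs y.
Hypothesis absD : forall x y, abs (x + y) <= Num.max (abs x) (abs y).
Hypothesis absN1 : abs (-1) = 1.

Lemma abs0 : abs 0 = 0. Proof. exact/abs_eq0. Qed.

Lemma absN x : abs (- x) = abs x.
Proof. by rewrite -mulN1r absM absN1 mul1r. Qed.

Lemma abs_ge0 x : 0 <= abs x.
Proof. by have := absD x (- x); rewrite subrr abs0 absN maxxx. Qed.

Lemma abs1 : abs 1 = 1.
Proof. by have := absM (-1) (-1); rewrite mulrNN mulr1 absN1 mulr1. Qed.

Lemma abs_sum_le (I : Type) (r : seq I) (P : pred I) (F : I -> K) (c : R) :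
  0 <= c -> (forall i, P i -> abs (F i) <= c) -> abs (\sum_(i <- r | P i) F i) <= c.
Proof.
move=> c0 Fc; elim/big_ind: _ => // [|x y xc yc]; first by rewrite abs0.
by apply: le_trans (absD x y) _; rewrite ge_max xc yc.
Qed.

Section Matrices.
Variable n : nat.
Implicit Types A B M : 'M[K]_n.

Lemma Nnorm_ge0 A : 0 <= Nnorm abs A.
Proof. exact: bigmax_ge_id. Qed.

Lemma Nnorm_le A r : 0 <= r ->
  Nnorm abs A <= r <-> forall j k : 'I_n, (j < k)%N -> abs (A j k) <= r ^+ (k - j).
Proof.
move=> r0; split=> [/bigmax_leP[_ NA] j k jk | Ar].
  have /bigmax_leP[_ /(_ k jk)] := NA j isT.
  by rewrite powR_invn_le ?abs_ge0 ?subn_gt0.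
apply/bigmax_leP; split=> // j _; apply/bigmax_leP; split=> // k jk.
by rewrite powR_invn_le ?abs_ge0 ?subn_gt0 ?Ar.
Qed.

Definition graded_bounded (r : R) M :=
  upper_mx M /\ forall j k : 'I_n, abs (M j k) <= r ^+ (k - j).

Lemma unitri_Nnorm_le A r : unitri A -> 0 <= r ->
  Nnorm abs A <= r <-> graded_bounded r A.
Proof.
move=> [uA dA] r0; rewrite Nnorm_le //; split=> [Ar | [_ Ar] j k _]; last exact: Ar.
split=> // j k; case: (ltngtP j k) => [jk | kj | /val_inj->]; first exact: Ar.
  by rewrite uA // abs0 exprn_ge0.
by rewrite dA abs1 subnn expr0.
Qed.

Lemma unitri_mulmx A B : unitri A -> unitri B -> unitri (A *m B).
Proof.
move=> [uA dA] [uB dB]; split; first exact: upper_mulmx.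
by move=> i; rewrite upper_mulmx_diag // dA dB mulr1.
Qed.

Lemma unitri_mulmx_neumann A : unitri A -> A *m \sum_(i < n) (1%:M - A) ^+ i = 1%:M.
Proof.
move=> [uA dA].
have strictY (j k : 'I_n) : (k <= j)%N -> (1%:M - A) j k = 0.
  rewrite leq_eqVlt !mxE => /orP[/eqP/val_inj-> | kj]; first by rewrite eqxx dA subrr.
  by rewrite uA // subr0 -val_eqE (gtn_eqF kj).
have Yn0 : (1%:M - A) ^+ n = 0.
  by apply/matrixP=> j k; rewrite mxE strict_upper_expr // ltn_addl.
by rewrite -{1}(subKr 1%:M A) mulmxE -opprB mulNr -subrX1 Yn0 sub0r opprK.
Qed.

Lemma unitri_unit A : unitri A -> A \in unitmx.
Proof. by move/unitri_mulmx_neumann/mulmx1_unit=> []. Qed.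

Section GradedBounded.
Variables (r : R) (r0 : 0 <= r).

Lemma graded_bounded0 : graded_bounded r 0.
Proof. by split=> j k; rewrite mxE // abs0 exprn_ge0. Qed.

Lemma graded_bounded1 : graded_bounded r 1%:M.
Proof.
split=> j k; rewrite mxE; first by case: eqP => // ->; rewrite ltnn.
by case: eqP => [->|_]; rewrite ?subnn ?abs1 ?abs0 ?exprn_ge0.
Qed.

Lemma graded_boundedD M M' :
  graded_bounded r M -> graded_bounded r M' -> graded_bounded r (M + M').
Proof.
move=> [uM bM] [uM' bM']; split=> j k; rewrite mxE; first by move=> kj; rewrite uM ?uM' ?addr0.
by apply: le_trans (absD _ _) _; rewrite ge_max bM bM'.
Qed.

Lemma graded_boundedN M : graded_bounded r M -> graded_bounded r (- M).
Proof. by move=> [uM bM]; split=> j k; rewrite mxE ?absN // => kj; rewrite uM ?oppr0. Qed.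

Lemma graded_bounded_sum m (F : 'I_m -> 'M[K]_n) :
  (forall i, graded_bounded r (F i)) -> graded_bounded r (\sum_i F i).
Proof.
by move=> Fr; elim/big_ind: _ => //; [exact: graded_bounded0 | exact: graded_boundedD].
Qed.

Lemma graded_bounded_mulmx M M' :
  graded_bounded r M -> graded_bounded r M' -> graded_bounded r (M *m M').
Proof.
move=> [uM bM] [uM' bM']; split=> [|j k]; first exact: upper_mulmx.
rewrite mxE; apply: abs_sum_le => [|i _]; first exact: exprn_ge0.
rewrite absM; case: (ltnP i j) => ij; first by rewrite uM // abs0 mul0r exprn_ge0.
case: (ltnP k i) => ki; first by rewrite uM' // abs0 mulr0 exprn_ge0.
by rewrite (_ : k - j = i - j + (k - i))%N 1?exprD ?ler_pM ?abs_ge0 //; lia.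
Qed.

Lemma graded_bounded_expr Y m : graded_bounded r Y -> graded_bounded r (Y ^+ m).
Proof.
move=> Yr; elim: m => [|m IHm]; first exact: graded_bounded1.
by rewrite exprS -mulmxE; apply: graded_bounded_mulmx.
Qed.

Lemma graded_bounded_invmx A : unitri A -> graded_bounded r A -> graded_bounded r (invmx A).
Proof.
move=> uA Ar; rewrite (mulmx1_invmx (unitri_mulmx_neumann uA)).
apply: graded_bounded_sum => i; apply: graded_bounded_expr.
exact: graded_boundedD graded_bounded1 (graded_boundedN Ar).
Qed.

End GradedBounded.

Lemma unitri_invmx A : unitri A -> unitri (invmx A).
Proof.
move=> uA; have [uAV _] : graded_bounded (Nnorm abs A) (invmx A).
  by apply: graded_bounded_invmx; rewrite ?Nnorm_ge0 // -unitri_Nnorm_le ?Nnorm_ge0.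
split=> // i; have /matrixP/(_ i i) := mulmxV (unitri_unit uA).
by rewrite upper_mulmx_diag //; [case: uA => _ ->; rewrite mul1r mxE eqxx | case: uA].
Qed.

Lemma Nnorm_invmx A : unitri A -> Nnorm abs (invmx A) = Nnorm abs A.
Proof.
suff NV B : unitri B -> Nnorm abs (invmx B) <= Nnorm abs B.
  move=> uA; apply: le_anti; rewrite NV //=.
  by rewrite -{1}(invmxK A) NV //; apply: unitri_invmx.
move=> uB; have N0 := Nnorm_ge0 B.
rewrite unitri_Nnorm_le //; last exact: unitri_invmx.
by apply: graded_bounded_invmx; rewrite // -unitri_Nnorm_le.
Qed.

Lemma Nnorm_mulmx A B : unitri A -> unitri B ->
  Nnorm abs (A *m B) <= Num.max (Nnorm abs A) (Nnorm abs B).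
Proof.
move=> uA uB; have r0 : 0 <= Num.max (Nnorm abs A) (Nnorm abs B).
  by rewrite le_max Nnorm_ge0.
rewrite unitri_Nnorm_le //; last exact: unitri_mulmx.
by apply: graded_bounded_mulmx; rewrite // -unitri_Nnorm_le // le_max lexx ?orbT.
Qed.

Lemma Nnorm_eq0 A : unitri A -> Nnorm abs A = 0 <-> A = 1%:M.
Proof.
move=> uA; split=> [NA0 | A1]; last first.
  have NA0 : Nnorm abs A <= 0.
    by apply/(unitri_Nnorm_le uA (lexx 0)); rewrite A1; exact: graded_bounded1.
  by apply/le_anti; rewrite NA0 Nnorm_ge0.
have [_ A0] : graded_bounded 0 A by apply/(unitri_Nnorm_le uA (lexx 0)); rewrite NA0.
case: uA => uA dA; apply/matrixP=> j k; rewrite mxE.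
case: (ltngtP j k) => [jk | kj | /val_inj->]; last by rewrite dA eqxx.
  rewrite -val_eqE (ltn_eqF jk); apply/abs_eq0/le_anti; rewrite abs_ge0 andbT.
  by rewrite (le_trans (A0 j k)) // expr0n subn_eq0 leqNgt jk.
by rewrite uA // -val_eqE (gtn_eqF kj).
Qed.

Lemma Nnorm_invmx_mulmxC A B : unitri A -> unitri B ->
  Nnorm abs (invmx B *m A) = Nnorm abs (invmx A *m B).
Proof.
move=> uA uB; rewrite -Nnorm_invmx; last exact/unitri_mulmx/uA/unitri_invmx.
by rewrite invmxM ?invmxK ?unitmx_inv ?unitri_unit.
Qed.

Lemma Nnorm_mulmx_invmxC A B : unitri A -> unitri B ->
  Nnorm abs (A *m invmx B) = Nnorm abs (B *m invmx A).
Proof.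
move=> uA uB; rewrite -Nnorm_invmx; last exact/unitri_mulmx/unitri_invmx.
by rewrite invmxM ?invmxK ?unitmx_inv ?unitri_unit.
Qed.

Lemma left_dist_ultrametric :
  is_ultrametric_on (@unitri K n) (fun A A' => Nnorm abs (invmx A' *m A)).
Proof.
split=> [A A' _ _ | A A' uA uA' | A A' uA uA' | A A' A'' uA uA' uA''].
- exact: Nnorm_ge0.
- rewrite Nnorm_eq0; last exact/unitri_mulmx/uA/unitri_invmx.
  split=> [/(congr1 (mulmx A')) | <-]; last exact: mulVmx (unitri_unit uA).
  by rewrite mulmxA mulmxV ?unitri_unit // mul1mx mulmx1.
- exact: Nnorm_invmx_mulmxC.
- have -> : invmx A'' *m A = (invmx A'' *m A') *m (invmx A' *m A).
    by rewrite mulmxA mulmxK ?unitri_unit.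
  by rewrite maxC Nnorm_mulmx //; apply/unitri_mulmx => //; exact: unitri_invmx.
Qed.

Lemma right_dist_ultrametric :
  is_ultrametric_on (@unitri K n) (fun A A' => Nnorm abs (A *m invmx A')).
Proof.
split=> [A A' _ _ | A A' uA uA' | A A' uA uA' | A A' A'' uA uA' uA''].
- exact: Nnorm_ge0.
- rewrite Nnorm_eq0; last exact/unitri_mulmx/unitri_invmx.
  split=> [/(congr1 (mulmx^~ A')) | <-]; last exact: mulmxV (unitri_unit uA).
  by rewrite mulmxKV ?unitri_unit // mul1mx.
- exact: Nnorm_mulmx_invmxC.
- have -> : A *m invmx A'' = (A *m invmx A') *m (A' *m invmx A'').
    by rewrite mulmxA mulmxKV ?unitri_unit.
  by rewrite Nnorm_mulmx //; apply/unitri_mulmx => //; exact: unitri_invmx.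
Qed.

Lemma left_dist_invariant G A A' : unitri G -> unitri A' ->
  Nnorm abs (invmx (G *m A') *m (G *m A)) = Nnorm abs (invmx A' *m A).
Proof.
move=> uG uA'; rewrite invmxM ?unitri_unit // -!mulmxA.
by rewrite (mulmxA (invmx G)) mulVmx ?mul1mx ?unitri_unit.
Qed.

Lemma right_dist_invariant G A A' : unitri G -> unitri A' ->
  Nnorm abs ((A *m G) *m invmx (A' *m G)) = Nnorm abs (A *m invmx A').
Proof.
move=> uG uA'; rewrite invmxM ?unitri_unit // !mulmxA.
by rewrite -(mulmxA A) mulmxV ?mulmx1 ?unitri_unit.
Qed.

Definition mxnorm M := \big[Num.max/0]_(ij : 'I_n * 'I_n) abs (M ij.1 ij.2).

Lemma mxnorm_ge0 M : 0 <= mxnorm M.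
Proof. exact: bigmax_ge_id. Qed.

Lemma mxnorm_le M c : 0 <= c -> mxnorm M <= c <-> forall i j, abs (M i j) <= c.
Proof.
move=> c0; split=> [/bigmax_leP[_ Mc] i j | Mc]; first exact: (Mc (i, j)).
by apply/bigmax_leP; split=> // -[i j].
Qed.

Lemma mxnorm_lt M c : 0 < c -> mxnorm M < c <-> forall i j, abs (M i j) < c.
Proof.
move=> c0; split=> [/bigmax_ltP[_ Mc] i j | Mc]; first exact: (Mc (i, j)).
by apply/bigmax_ltP; split=> // -[i j].
Qed.

Lemma mxnorm_entry_le M i j : abs (M i j) <= mxnorm M.
Proof. exact: (le_bigmax _ _ (i, j)). Qed.

Lemma mxnormD M M' : mxnorm (M + M') <= Num.max (mxnorm M) (mxnorm M').
Proof.
apply/mxnorm_le => [|i j]; first by rewrite le_max mxnorm_ge0.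
rewrite mxE (le_trans (absD _ _)) // ge_max !le_max !mxnorm_entry_le ?orbT //.
Qed.

Lemma mxnorm_mulmx M M' : mxnorm (M *m M') <= mxnorm M * mxnorm M'.
Proof.
apply/mxnorm_le => [|i j]; first by rewrite mulr_ge0 ?mxnorm_ge0.
rewrite mxE; apply: abs_sum_le => [|l _]; first by rewrite mulr_ge0 ?mxnorm_ge0.
by rewrite absM ler_pM ?abs_ge0 ?mxnorm_entry_le.
Qed.

Lemma unitri_mxnorm_le_Nnorm W : unitri W -> Nnorm abs W <= 1 ->
  mxnorm (W - 1%:M) <= Nnorm abs W.
Proof.
move=> uW NW1; have N0 := Nnorm_ge0 W.
have [_ Wr] : graded_bounded (Nnorm abs W) W by apply/unitri_Nnorm_le.
apply/mxnorm_le => // i j; rewrite !mxE; case: uW => uW dW.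
case: (ltngtP i j) => [ij | ji | /val_inj->]; last by rewrite dW eqxx subrr abs0.
  rewrite -val_eqE (ltn_eqF ij) subr0 (le_trans (Wr i j)) //.
  by rewrite -[leRHS]expr1 ler_wiXn2l // subn_gt0.
by rewrite uW // -val_eqE (gtn_eqF ji) subrr abs0.
Qed.

Lemma unitri_Nnorm_le_mxnorm W c : unitri W -> 0 <= c <= 1 ->
  mxnorm (W - 1%:M) <= c ^+ n -> Nnorm abs W <= c.
Proof.
move=> uW /andP[c0 c1] Wc; apply/unitri_Nnorm_le => //.
have [uW' dW] := uW; split=> // j k.
case: (ltngtP j k) => [jk | kj | /val_inj->]; last by rewrite dW abs1 subnn expr0.
  have := mxnorm_entry_le (W - 1%:M) j k; rewrite !mxE -val_eqE (ltn_eqF jk) subr0.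
  move/le_trans/(_ Wc)/le_trans; apply; apply: ler_wiXn2l => //.
  by rewrite (leq_trans (leq_subr _ _)) // ltnW.
by rewrite uW' // abs0 exprn_ge0.
Qed.

Lemma mxnorm_subr_lt X Y e : 0 < e ->
  mxnorm (Y - X) < e <-> forall i j, abs (Y i j - X i j) < e.
Proof.
move=> e0; rewrite mxnorm_lt //.
by split=> YXe i j; move: (YXe i j); rewrite !mxE.
Qed.

Lemma induces_subspace_topology_mxnorm (S : 'M[K]_n -> Prop) (d : 'M[K]_n -> 'M[K]_n -> R) :
  (forall X e, S X -> 0 < e -> exists2 dl, 0 < dl &
     forall Y, S Y -> mxnorm (Y - X) < dl -> d X Y < e) ->
  (forall X e, S X -> 0 < e -> exists2 eta, 0 < eta &
     forall Y, S Y -> d X Y < eta -> mxnorm (Y - X) < e) ->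
  induces_subspace_topology abs S d.
Proof.
move=> ball_in_box box_in_ball U US; split=> [Uopen | [V Vopen UV] X UX].
  pose V Y := exists X, U X /\ exists2 dl, 0 < dl &
    (forall Z, S Z -> mxnorm (Z - X) < dl -> U Z) /\ mxnorm (Y - X) < dl.
  exists V => [Y [X [UX [dl dl0 [UZ YX]]]] | X].
    exists dl => // Y' /(mxnorm_subr_lt _ _ dl0) Y'Y; exists X; split=> //.
    exists dl => //; split=> //; rewrite -(subrKA Y) (le_lt_trans (mxnormD _ _)) //.
    by rewrite gt_max Y'Y YX.
  split=> [UX | [[X' [_ [dl _ [UZ XX']]]] SX]]; last exact: UZ.
  split; last exact: US.
  have [e e0 Ue] := Uopen X UX; have [dl dl0 dle] := ball_in_box X e (US X UX) e0.
  exists X; split=> //; exists dl => //; split=> [Z SZ /(dle _ SZ)|]; first exact: Ue.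
  by apply/mxnorm_subr_lt => // i j; rewrite subrr abs0.
have [VX SX] := (UV X).1 UX; have [e e0 Ve] := Vopen X VX.
have [eta eta0 etae] := box_in_ball X e SX e0.
exists eta => // Y SY /(etae _ SY) YX; apply/UV; split=> //.
exact/Ve/(mxnorm_subr_lt _ _ e0).
Qed.

Lemma Nnorm_dist_topology (d : 'M[K]_n -> 'M[K]_n -> R) (W : 'M[K]_n -> 'M[K]_n -> 'M[K]_n) :
  (forall X Y, unitri X -> unitri Y -> unitri (W X Y) /\ d X Y = Nnorm abs (W X Y)) ->
  (forall X, unitri X -> exists2 C, 0 <= C & forall Y, unitri Y ->
     mxnorm (W X Y - 1%:M) <= C * mxnorm (Y - X) /\
     mxnorm (Y - X) <= C * mxnorm (W X Y - 1%:M)) ->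
  induces_subspace_topology abs (@unitri K n) d.
Proof.
move=> dW WC; apply: induces_subspace_topology_mxnorm => X e uX e0;
  have [C C0 XC] := WC X uX; have C1 : 0 < C + 1 by lra.
- pose c := Num.min e 1 / 2.
  have [c0 c1 ce] : [/\ 0 < c, c <= 1 & c < e].
    have m0 : 0 < Num.min e 1 by rewrite lt_min e0 ltr01.
    have me : Num.min e 1 <= e by rewrite ge_min lexx.
    have m1 : Num.min e 1 <= 1 by rewrite ge_min lexx orbT.
    by rewrite /c; split; lra.
  exists (c ^+ n / (C + 1)) => [|Y uY]; first by rewrite divr_gt0 ?exprn_gt0.
  rewrite ltr_pdivlMr // => YX; have [uW ->] := dW X Y uX uY.
  apply: le_lt_trans ce; apply: unitri_Nnorm_le_mxnorm; rewrite ?c1 ?ltW //.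
  have := mxnorm_ge0 (Y - X); have := (XC Y uY).1; nra.
- exists (Num.min 1 (e / (C + 1))) => [|Y uY]; first by rewrite lt_min ltr01 divr_gt0.
  have [uW ->] := dW X Y uX uY; rewrite lt_min ltr_pdivlMr // => /andP[W1 We].
  have := mxnorm_ge0 (W X Y - 1%:M); have := (XC Y uY).2.
  have := unitri_mxnorm_le_Nnorm uW (ltW W1); nra.
Qed.

Lemma left_dist_topology : induces_subspace_topology abs (@unitri K n)
  (fun A A' => Nnorm abs (invmx A' *m A)).
Proof.
apply: (Nnorm_dist_topology (W := fun X Y => invmx X *m Y)) => [X Y uX uY | X uX].
  by split; [apply: unitri_mulmx (unitri_invmx uX) uY | apply: Nnorm_invmx_mulmxC].
have uX' := unitri_unit uX.
exists (Num.max (mxnorm (invmx X)) (mxnorm X)) => [|Y uY]; first by rewrite le_max mxnorm_ge0.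
have WYX : invmx X *m Y - 1%:M = invmx X *m (Y - X) by rewrite mulmxBr mulVmx.
have YXW : Y - X = X *m (invmx X *m Y - 1%:M) by rewrite WYX mulmxA mulmxV ?mul1mx.
rewrite {2}YXW {1}WYX; split; apply: le_trans (mxnorm_mulmx _ _) _;
  by rewrite ler_wpM2r ?mxnorm_ge0 // le_max lexx ?orbT.
Qed.

Lemma right_dist_topology : induces_subspace_topology abs (@unitri K n)
  (fun A A' => Nnorm abs (A *m invmx A')).
Proof.
apply: (Nnorm_dist_topology (W := fun X Y => Y *m invmx X)) => [X Y uX uY | X uX].
  by split; [apply: unitri_mulmx uY (unitri_invmx uX) | apply: Nnorm_mulmx_invmxC].
have uX' := unitri_unit uX.
exists (Num.max (mxnorm (invmx X)) (mxnorm X)) => [|Y uY]; first by rewrite le_max mxnorm_ge0.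
have WYX : Y *m invmx X - 1%:M = (Y - X) *m invmx X by rewrite mulmxBl mulmxV.
have YXW : Y - X = (Y *m invmx X - 1%:M) *m X by rewrite WYX mulmxKV.
rewrite {2}YXW {1}WYX; split; apply: le_trans (mxnorm_mulmx _ _) _;
  by rewrite mulrC ler_wpM2r ?mxnorm_ge0 // le_max lexx ?orbT.
Qed.

End Matrices.

End UltrametricAbs.

Lemma padic_abs_ratN1 (R : realType) (p : nat) : padic_abs_rat R p (-1) = 1.
Proof. by rewrite /padic_abs_rat /= logn1 expr0 divr1. Qed.

Theorem mainTheorem5 (R : realType) (p : nat) (hp : prime p) (n : nat)
  (hn : (2 <= n)%N) (K : fieldType) (abs : K -> R) (hK : is_Qp p abs) :
  (forall A : 'M[K]_n, unitri A -> Nnorm abs (invmx A) = Nnorm abs A)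
  /\ (is_ultrametric_on (@unitri K n) (fun A A' : 'M[K]_n => Nnorm abs (invmx A' *m A))
      /\ (forall G A A' : 'M[K]_n, unitri G -> unitri A -> unitri A' ->
            Nnorm abs (invmx (G *m A') *m (G *m A)) = Nnorm abs (invmx A' *m A))
      /\ induces_subspace_topology abs (@unitri K n)
           (fun A A' : 'M[K]_n => Nnorm abs (invmx A' *m A)))
  /\ (is_ultrametric_on (@unitri K n) (fun A A' : 'M[K]_n => Nnorm abs (A *m invmx A'))
      /\ (forall G A A' : 'M[K]_n, unitri G -> unitri A -> unitri A' ->
            Nnorm abs ((A *m G) *m invmx (A' *m G)) = Nnorm abs (A *m invmx A'))
      /\ induces_subspace_topology abs (@unitri K n)
           (fun A A' : 'M[K]_n => Nnorm abs (A *m invmx A'))).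
Proof.
case: hK => abs_eq0 [absM absD] abs_ratr _ _.
have absN1 : abs (-1) = 1.
  by have := abs_ratr (-1)%:~R; rewrite ratr_int !rmorphN1 padic_abs_ratN1.
split; first exact: Nnorm_invmx.
split; (split; [|split]).
- exact: left_dist_ultrametric.
- by move=> G A A' uG _ uA'; apply: left_dist_invariant.
- exact: left_dist_topology.
- exact: right_dist_ultrametric.
- by move=> G A A' uG _ uA'; apply: right_dist_invariant.
- exact: right_dist_topology.
Qed.
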